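(* Let ${\cal G}_{sym}$ be the class of scheduling games on related machines with arbitrary priority lists in which all jobs have the same processing-time function (either all $p(t)=b+at$ with $b,a\ge0$, or all $p(t)=\max\{\tau,b-at\}$ with $b,a\ge0$, $\tau>0$). Then $PoA({\cal G}_{sym})=PoS({\cal G}_{sym})=1$; that is, every game in ${\cal G}_{sym}$ has a pure Nash equilibrium and every pure Nash equilibrium has minimum makespan.
   Context: Scheduling game: a finite set $N$ of $n\ge1$ jobs (players) and a set $M$ of machines. Machine $j$ has speed $s_j>0$ and a priority list $\pi_j$, a bijection $N\to\{1,\dots,n\}$; job $u$ has higher priority than $v$ on $j$ iff $\pi_j(u)<\pi_j(v)$. A profile $\sigma\in M^N$ assigns each job to a machine. On machine $j$, the jobs assigned to it, listed in increasing $\pi_j$-order as $i_1,i_2,\dots$, are processed without idle time: $S_{i_1}(\sigma)=0$, $C_{i_k}(\sigma)=S_{i_k}(\sigma)+p_{i_k}(S_{i_k}(\sigma))/s_j$, $S_{i_{k+1}}(\sigma)=C_{i_k}(\sigma)$. The cost of job $i$ is $C_i(\sigma)$. A pure Nash equilibrium (NE) is a profile in which no job can strictly decrease its completion time by unilaterally changing its machine. Makespan $C_{\max}(\sigma)=\max_iC_i(\sigma)$; $OPT(G)=\min_\sigma C_{\max}(\sigma)$ over all profiles. For a game with at least one NE, $PoA(G)=\max_{\sigma\text{ NE}}C_{\max}(\sigma)/OPT(G)$ and $PoS(G)=\min_{\sigma\text{ NE}}C_{\max}(\sigma)/OPT(G)$; for a class, the supremum over its games. *)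

From HB Require Import structures.
From mathcomp Require Import all_boot all_order all_algebra all_fingroup.
From mathcomp Require Import reals.
Set Implicit Arguments. Unset Strict Implicit. Unset Printing Implicit Defensive.
Import Order.TTheory GRing.Theory Num.Theory.
Local Open Scope ring_scope.

Section Sched.
Variables (R : realType) (n : nat) (M : finType).
(* common processing-time function of all jobs, speeds, priority lists *)
Variables (p : R -> R) (s : M -> R) (pi : M -> {perm 'I_n}).

Definition profile := {ffun 'I_n -> M}.

(* jobs assigned to machine j by sigma, in increasing priority order
   (i.e. increasing pi j-rank) *)
Definition queue (sigma : profile) (j : M) : seq 'I_n :=
  [seq ((pi j)^-1)%g k | k <- enum 'I_n & sigma (((pi j)^-1)%g k) == j].

Fixpoint ctime (sp : R) (t : R) (l : seq 'I_n) (i : 'I_n) : R :=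
  match l with
  | [::] => 0
  | u :: l' => let c := t + p t / sp in
               if u == i then c else ctime sp c l' i
  end.

Definition C (sigma : profile) (i : 'I_n) : R :=
  ctime (s (sigma i)) 0 (queue sigma (sigma i)) i.

Definition deviate (sigma : profile) (i : 'I_n) (j : M) : profile :=
  [ffun k => if k == i then j else sigma k].

Definition is_NE (sigma : profile) : Prop :=
  forall (i : 'I_n) (j : M), C sigma i <= C (deviate sigma i j) i.

Definition Cmax (sigma : profile) : R := \big[Num.max/0]_(i < n) C sigma i.

Definition min_makespan (sigma : profile) : Prop :=
  forall tau : profile, Cmax sigma <= Cmax tau.
End Sched.

Definition sym_proc (R : realType) (p : R -> R) : Prop :=
  (exists a b : R, 0 <= a /\ 0 <= b /\ p = (fun t => b + a * t)) \/
  (exists a b tau : R, 0 <= a /\ 0 <= b /\ 0 < tau /\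
     p = (fun t => Num.max tau (b - a * t))).

From HB Require Import structures.
From mathcomp Require Import all_boot all_order all_algebra all_fingroup.
From mathcomp Require Import reals zify.
Import Order.TTheory GRing.Theory Num.Theory.
Local Open Scope ring_scope.

Set Implicit Arguments. Unset Strict Implicit. Unset Printing Implicit Defensive.

(* Since all jobs share the processing-time function p, the completion time of
   a job depends only on the speed of its machine and on its position k in the
   queue: it is the k-th iterate of t |-> t + p(t)/s from 0, which is
   nondecreasing in k as soon as p >= 0 on [0, +oo).

   A Nash equilibrium sigma is then optimal: given any profile tau and a job i
   on machine j, either tau puts at least as many jobs on j as sigma, and the
   last of them finishes no earlier than i does, or tau puts more jobs than
   sigma on some machine j'; then i could move to j' with at most
   #jobs_sigma(j') jobs ahead of it, so by stability it finishes no later than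
   the last job that tau puts on j'.

   An equilibrium is built greedily: pick the machine j on which one more job
   would finish earliest and assign to it the unplaced job of highest priority
   on j.  Every placed job precedes every unplaced one on its own machine, so
   later insertions never delay it there, and they can only delay it
   elsewhere; the newly placed job is stable by the choice of j.  Nothing about
   p beyond its nonnegativity on [0, +oo) is used. *)

Section Completion.
Variables (R : realType) (p : R -> R) (sp : R).

Definition proc_step (t : R) : R := t + p t / sp.

Definition completion (k : nat) : R := iter k proc_step 0.

Lemma ctimeE n t (l : seq 'I_n) i :
  ctime p sp t l i = if i \in l then iter (index i l).+1 proc_step t else 0.
Proof.
elim: l t => [|u l IHl] t //=.
rewrite inE eq_sym; case: eqP => [->|_] //=.
by rewrite IHl; case: ifP => // _; rewrite -iterSr.
Qed.

Hypotheses (p_ge0 : forall t, 0 <= t -> 0 <= p t) (sp_gt0 : 0 < sp).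

Lemma completion_ge0 k : 0 <= completion k.
Proof.
elim: k => [|k IHk] //=.
by rewrite /proc_step addr_ge0 // divr_ge0 ?p_ge0 // ltW.
Qed.

Lemma completion_homo : {homo completion : k k' / (k <= k')%N >-> k <= k'}.
Proof.
apply: homo_leq => [x|x y z|k]; [exact: lexx|exact: le_trans|].
rewrite [completion k.+1]/= /proc_step lerDl.
by rewrite divr_ge0 ?p_ge0 ?completion_ge0 ?ltW.
Qed.

End Completion.

Lemma index_sorted_lt d (T : orderType d) (s : seq T) x :
  sorted <%O s -> x \in s -> index x s = count (< x)%O s.
Proof.
elim: s => [|y s IHs] //= s_sorted.
have y_min : all (> y)%O s by exact: order_path_min lt_trans s_sorted.
rewrite inE eq_sym; case: eqP => [<- _|/eqP y_neq_x xs] /=.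
  rewrite ltxx add0n; apply/esym/eqP; rewrite -leqn0 leqNgt -has_count.
  by apply/hasPn => z zs; rewrite /= -leNgt ltW // (allP y_min).
by rewrite (allP y_min x xs) IHs //; exact: path_sorted s_sorted.
Qed.

Section Queues.
Variables (n : nat) (M : finType) (pi : M -> {perm 'I_n}).
Implicit Types (sigma : profile n M) (S : {set 'I_n}) (i : 'I_n) (j : M).

Definition ahead sigma S j i : nat :=
  #|[set u in S | (sigma u == j) && (pi j u < pi j i)%N]|.

Definition load sigma S j : nat := #|[set u in S | sigma u == j]|.

Lemma mem_queue sigma j i : (i \in queue pi sigma j) = (sigma i == j).
Proof.
rewrite /queue -[i in LHS](permK (pi j)) mem_map; last exact: perm_inj.
by rewrite mem_filter mem_enum andbT permK.
Qed.

Lemma index_queue sigma j i :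
  sigma i = j -> index i (queue pi sigma j) = ahead sigma setT j i.
Proof.
move=> sigma_i; rewrite /queue; set P := pi j.
set F := [seq k <- enum 'I_n | sigma ((P^-1)%g k) == j].
have F_sorted : sorted <%O F.
  apply: sorted_filter; first exact: lt_trans.
  by have := iota_ltn_sorted 0 n; rewrite -val_enum_ord sorted_map.
have Pi_F : P i \in F by rewrite mem_filter mem_enum permK sigma_i eqxx.
rewrite -[i in LHS](permK P) index_map; last exact: perm_inj.
rewrite (index_sorted_lt F_sorted Pi_F) count_filter enumT.
rewrite /ahead -(card_imset _ (@perm_inj _ P)) cardE /enum_mem size_filter.
apply: eq_count => k /=.
rewrite -[k in RHS](permKV P) mem_imset; last exact: perm_inj.
by rewrite !inE andbC permKV.
Qed.

Lemma ahead_lt_load sigma S i :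
  i \in S -> (ahead sigma S (sigma i) i < load sigma S (sigma i))%N.
Proof.
move=> iS; rewrite /load (cardsD1 i) !inE iS eqxx add1n ltnS.
apply/subset_leq_card/subsetP => u; rewrite !inE => /and3P[uS -> lt_ui].
by rewrite uS !andbT; apply: contraTneq lt_ui => ->; rewrite ltnn.
Qed.

Lemma ahead_le_load sigma S j i : (ahead sigma S j i <= load sigma S j)%N.
Proof.
by apply/subset_leq_card/subsetP => u; rewrite !inE => /and3P[-> ->].
Qed.

Lemma exists_last_job sigma j :
  (0 < load sigma setT j)%N ->
  exists2 u, sigma u = j & ahead sigma setT j u = (load sigma setT j).-1.
Proof.
move=> /card_gt0P[u0]; rewrite !inE => u0_j.
have [u /eqP u_j u_max] :=
  @arg_maxnP _ u0 (fun v => sigma v == j) (fun v => nat_of_ord (pi j v)) u0_j.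
exists u => //.
rewrite /load (cardsD1 u) !inE u_j eqxx add1n /=.
apply: eq_card => v; rewrite !inE.
case: (eqVneq v u) => [->|v_neq_u] /=; first by rewrite ltnn andbF.
case v_j: (sigma v == j) => //=.
have /= le_vu := u_max v v_j; rewrite ltn_neqAle le_vu andbT.
by apply: contra v_neq_u => /eqP/val_inj/perm_inj ->.
Qed.

Lemma sum_load sigma : (\sum_j load sigma setT j)%N = n.
Proof.
rewrite -[n in RHS]card_ord -sum1_card (partition_big sigma xpredT) //=.
apply: eq_bigr => j _; rewrite /load -sum1_card.
by apply: eq_bigl => u; rewrite !inE.
Qed.

End Queues.

Section Insertion.
Variables (n : nat) (M : finType) (pi : M -> {perm 'I_n}).

Definition served_first (sigma : profile n M) (S : {set 'I_n}) : Prop :=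
  forall u v, u \in S -> v \notin S -> (pi (sigma u) u < pi (sigma u) v)%N.

Variables (sigma : profile n M) (S : {set 'I_n}) (u : 'I_n) (j : M).
Hypothesis u_notin_S : u \notin S.
Let sigma' := deviate sigma u j.

Let sigma'_u : sigma' u = j.
Proof. by rewrite /sigma' /deviate ffunE eqxx. Qed.

Let sigma'_S v : v \in S -> sigma' v = sigma v.
Proof.
by move=> vS; rewrite /sigma' /deviate ffunE; case: eqP vS u_notin_S => // ->->.
Qed.

Lemma ahead_deviate_le i j' :
  i \in S -> (ahead pi sigma S j' i <= ahead pi sigma' (u |: S) j' i)%N.
Proof.
move=> iS; apply/subset_leq_card/subsetP => v; rewrite !inE.
by case/and3P => vS sigma_v lt_vi; rewrite vS orbT sigma'_S // sigma_v lt_vi.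
Qed.

Hypothesis sigma_S : served_first sigma S.

Lemma ahead_deviate_own i :
  i \in S -> ahead pi sigma' (u |: S) (sigma i) i = ahead pi sigma S (sigma i) i.
Proof.
move=> iS; apply: eq_card => v; rewrite !inE.
case: (eqVneq v u) => [->|v_neq_u] /=.
  rewrite (negbTE u_notin_S) sigma'_u; apply/negbTE/andP => -[_ lt_ui].
  by have := sigma_S iS u_notin_S; rewrite ltnNge (ltnW lt_ui).
by case vS: (v \in S); rewrite /= ?sigma'_S.
Qed.

Lemma ahead_deviate_new j' : ahead pi sigma' (u |: S) j' u = load sigma S j'.
Proof.
apply: eq_card => v; rewrite !inE.
case: (eqVneq v u) => [->|v_neq_u] /=.
  by rewrite (negbTE u_notin_S) ltnn !andbF.
case vS: (v \in S) => //=; rewrite sigma'_S //.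
by case: eqP => //= <-; exact: sigma_S.
Qed.

Lemma served_first_deviate :
  (forall v, v \notin S -> (pi j u <= pi j v)%N) -> served_first sigma' (u |: S).
Proof.
move=> u_min x y; rewrite !inE negb_or => /orP[/eqP->|xS] /andP[y_neq_u yS].
  rewrite sigma'_u ltn_neqAle u_min // andbT.
  by apply: contra y_neq_u => /eqP/val_inj/perm_inj ->.
by rewrite sigma'_S //; exact: sigma_S.
Qed.

End Insertion.

Lemma exists_lt_of_sum_eq (I : finType) (f g : I -> nat) j :
  (\sum_i f i = \sum_i g i)%N -> (g j < f j)%N -> exists i, (f i < g i)%N.
Proof.
move=> sum_fg lt_gf_j; apply/existsP; apply: contraLR lt_gf_j => /existsPn g_le_f.
have : (\sum_(i | i != j) g i <= \sum_(i | i != j) f i)%N.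
  by apply: leq_sum => i _; rewrite leqNgt g_le_f.
by move: sum_fg; rewrite (bigD1 j) // [X in _ = X](bigD1 j) //=; lia.
Qed.

Section Schedules.
Variables (R : realType) (n : nat) (M : finType).
Variables (p : R -> R) (s : M -> R) (pi : M -> {perm 'I_n}).
Implicit Types (sigma tau : profile n M) (S : {set 'I_n}) (i : 'I_n) (j : M).

Lemma C_aheadE sigma i :
  C p s pi sigma i =
  completion p (s (sigma i)) (ahead pi sigma setT (sigma i) i).+1.
Proof. by rewrite /C ctimeE mem_queue eqxx index_queue. Qed.

Lemma C_deviate sigma i j :
  C p s pi (deviate sigma i j) i =
  completion p (s j) (ahead pi sigma setT j i).+1.
Proof.
rewrite C_aheadE /deviate ffunE eqxx; congr (completion _ _ _.+1).
apply: eq_card => u; rewrite !inE ffunE.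
by case: (eqVneq u i) => [->|]; rewrite ?ltnn ?andbF.
Qed.

Hypotheses (p_ge0 : forall t, 0 <= t -> 0 <= p t) (s_gt0 : forall j, 0 < s j).

Lemma completion_le_Cmax tau j k :
  (k < load tau setT j)%N -> completion p (s j) k.+1 <= Cmax p s pi tau.
Proof.
move=> lt_k_load; have load_gt0 := leq_ltn_trans (leq0n k) lt_k_load.
have [u tau_u ahead_u] := exists_last_job pi load_gt0.
apply: le_trans (le_bigmax _ _ u).
by rewrite C_aheadE tau_u ahead_u prednK // completion_homo.
Qed.

Lemma NE_min_makespan sigma : is_NE p s pi sigma -> min_makespan p s pi sigma.
Proof.
move=> sigma_NE tau; apply: bigmax_le => [|i _]; first exact: bigmax_ge_id.
rewrite C_aheadE; set j := sigma i.
have lt_ahead_load := ahead_lt_load pi sigma (in_setT i).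
have [le_load|lt_load] := leqP (load sigma setT j) (load tau setT j).
  exact/completion_le_Cmax/(leq_trans lt_ahead_load).
have sum_loads : (\sum_j load sigma setT j = \sum_j load tau setT j)%N.
  by rewrite !sum_load.
have [j' lt_load'] := exists_lt_of_sum_eq sum_loads lt_load.
apply: le_trans (completion_le_Cmax lt_load').
rewrite -C_aheadE (le_trans (sigma_NE i j')) // C_deviate.
by rewrite completion_homo // ltnS ahead_le_load.
Qed.

Definition stable_on sigma S : Prop :=
  forall i, i \in S -> forall j,
    completion p (s (sigma i)) (ahead pi sigma S (sigma i) i).+1
    <= completion p (s j) (ahead pi sigma S j i).+1.

Lemma stable_on_setT_NE sigma : stable_on sigma setT -> is_NE p s pi sigma.
Proof.
by move=> sigma_stable i j; rewrite C_aheadE C_deviate sigma_stable ?inE.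
Qed.

Lemma greedy_step sigma S v0 :
  served_first pi sigma S -> stable_on sigma S -> v0 \notin S ->
  exists u sigma',
    [/\ u \notin S, served_first pi sigma' (u |: S) & stable_on sigma' (u |: S)].
Proof.
move=> sigma_S sigma_stable v0S.
pose next_completion j := completion p (s j) (load sigma S j).+1.
have [j _ j_min] := @arg_minP _ _ M (sigma v0) xpredT next_completion isT.
have [u uS u_min] :=
  @arg_minnP _ v0 (fun v => v \notin S) (fun v => nat_of_ord (pi j v)) v0S.
exists u, (deviate sigma u j); split => //; first exact: served_first_deviate.
move=> i; rewrite !inE => /orP[/eqP->|iS] j'.
  by rewrite !ahead_deviate_new // /deviate ffunE eqxx; exact: j_min.
have -> : deviate sigma u j i = sigma i.
  by rewrite ffunE; case: eqP iS uS => // ->->.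
rewrite ahead_deviate_own //; apply: le_trans (sigma_stable i iS j') _.
by rewrite completion_homo // ltnS ahead_deviate_le.
Qed.

Lemma exists_stable_profile (m0 : M) k : (k <= n)%N ->
  exists sigma S, [/\ #|S| = k, served_first pi sigma S & stable_on sigma S].
Proof.
elim: k => [|k IHk] lt_k_n.
  by exists [ffun => m0], set0; split => [|u v|i]; rewrite ?cards0 ?inE.
have [sigma [S [card_S sigma_S sigma_stable]]] := IHk (ltnW lt_k_n).
have /card_gt0P[v0] : (0 < #|~: S|)%N.
  by have := cardsC S; rewrite card_ord card_S; lia.
rewrite inE => v0S.
have [u [sigma' [uS sigma'_S sigma'_stable]]] :=
  greedy_step sigma_S sigma_stable v0S.
by exists sigma', (u |: S); rewrite cardsU1 uS card_S.
Qed.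

End Schedules.

Lemma sym_proc_ge0 (R : realType) (p : R -> R) :
  sym_proc p -> forall t, 0 <= t -> 0 <= p t.
Proof.
case=> [[a [b [a_ge0 [b_ge0 ->]]]]|[a [b [tau [_ [_ [tau_gt0 ->]]]]]]] t t_ge0.
  by rewrite addr_ge0 // mulr_ge0.
by rewrite le_max ltW.
Qed.

Theorem theorem8 (R : realType) (n : nat) (M : finType)
    (p : R -> R) (s : M -> R) (pi : M -> {perm 'I_n}) :
  (0 < n)%N -> (0 < #|M|)%N ->
  (forall j, 0 < s j) ->
  sym_proc p ->
  (exists sigma : profile n M, is_NE p s pi sigma) /\
  (forall sigma : profile n M, is_NE p s pi sigma -> min_makespan p s pi sigma).
Proof.
move=> _ /card_gt0P[m0 _] s_gt0 /sym_proc_ge0 p_ge0.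
split; last exact: NE_min_makespan.
have [sigma [S [card_S _ sigma_stable]]] :=
  exists_stable_profile pi p_ge0 s_gt0 m0 (leqnn n).
have S_full : S = setT.
  by apply/eqP; rewrite eqEcard subsetT cardsT card_ord card_S leqnn.
by exists sigma; apply: stable_on_setT_NE; rewrite -S_full.
Qed.
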